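(* In the isotropic setting below, let $F\in\mathrm{GL}^+(3)$ be fixed and $t\mapsto C_p(t)\in\mathrm{PSym}(3)$ be differentiable. Put $F_p(t)=\sqrt{C_p(t)}$, $F_e=FF_p^{-1}$, $B_e=F_eF_e^T=FC_p^{-1}F^T$, $\tau_e=DW(F_e)F_e^T$. Then $$\frac{d}{dt}\widetilde W\big(CC_p^{-1}(t)\big)=\frac12\Big\langle\tau_e,\;F\,\frac{d}{dt}[C_p^{-1}]\,F^T B_e^{-1}\Big\rangle.$$ If moreover at time $t$ one has $\mathrm{dev}_3\tau_e\neq0$ and the Simo–Miehe flow rule $\frac{d}{dt}[C_p^{-1}]=-2\lambda\,F^{-1}\big[\frac{\mathrm{dev}_3\tau_e}{\|\mathrm{dev}_3\tau_e\|}B_e\big]F^{-T}$ with $\lambda\ge0$, then $$\frac{d}{dt}\widetilde W\big(CC_p^{-1}(t)\big)=-\lambda\,\|\mathrm{dev}_3\tau_e\|\le0.$$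
   Context: $W:\mathrm{GL}^+(3)\to\mathbb{R}$ objective and isotropic ($W(QFR)=W(F)$, $Q,R\in\mathrm{SO}(3)$), written $W(F_e)=\Psi(I_1(C_e),I_2(C_e),I_3(C_e))$ with $\Psi\in C^1$, $C_e=F_e^TF_e$; $\widetilde W(X)=\Psi(\mathrm{tr}X,\mathrm{tr}(\mathrm{Cof}X),\det X)$, so that $W(F_e)=\widetilde W(CC_p^{-1})$ with $C=F^TF$. $\langle X,Y\rangle=\mathrm{tr}(XY^T)$, $\|\cdot\|$ Frobenius norm, $DW$ gradient, $\mathrm{dev}_3X=X-\frac13\mathrm{tr}(X)\mathbb{1}$. For isotropic $W$, $\tau_e$ is symmetric and commutes with $B_e$. *)

(* classical reals (derivatives needed). 3x3 real matrices are
   represented as functions nat -> nat -> R, only entries i,j < 3 matter. *)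
From Stdlib Require Export Reals.
Open Scope R_scope.

Definition Mat3 := nat -> nat -> R.

Definition mat_eq (A B : Mat3) : Prop :=
  forall i j : nat, (i < 3)%nat -> (j < 3)%nat -> A i j = B i j.

Definition idm : Mat3 := fun i j => if Nat.eqb i j then 1 else 0.
Definition madd (A B : Mat3) : Mat3 := fun i j => A i j + B i j.
Definition mscal (a : R) (A : Mat3) : Mat3 := fun i j => a * A i j.
Definition mtr (A : Mat3) : Mat3 := fun i j => A j i.
Definition mmul (A B : Mat3) : Mat3 :=
  fun i j => A i 0%nat * B 0%nat j + A i 1%nat * B 1%nat j + A i 2%nat * B 2%nat j.
Definition trace (A : Mat3) : R := A 0%nat 0%nat + A 1%nat 1%nat + A 2%nat 2%nat.
Definition det3 (A : Mat3) : R :=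
    A 0%nat 0%nat * (A 1%nat 1%nat * A 2%nat 2%nat - A 1%nat 2%nat * A 2%nat 1%nat)
  - A 0%nat 1%nat * (A 1%nat 0%nat * A 2%nat 2%nat - A 1%nat 2%nat * A 2%nat 0%nat)
  + A 0%nat 2%nat * (A 1%nat 0%nat * A 2%nat 1%nat - A 1%nat 1%nat * A 2%nat 0%nat).
(* cofactor matrix (signed minors), cyclic formula valid for 3x3 *)
Definition cof (A : Mat3) : Mat3 := fun i j =>
  A ((i+1) mod 3)%nat ((j+1) mod 3)%nat * A ((i+2) mod 3)%nat ((j+2) mod 3)%nat
  - A ((i+1) mod 3)%nat ((j+2) mod 3)%nat * A ((i+2) mod 3)%nat ((j+1) mod 3)%nat.
Definition minv (A : Mat3) : Mat3 := mscal (/ det3 A) (mtr (cof A)).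

Definition inner (X Y : Mat3) : R := trace (mmul X (mtr Y)).
Definition fnorm (X : Mat3) : R := sqrt (inner X X).
Definition dev3 (X : Mat3) : Mat3 := madd X (mscal (- (trace X / 3)) idm).

Definition symmetric (A : Mat3) : Prop := mat_eq (mtr A) A.
Definition psym (A : Mat3) : Prop :=
  symmetric A /\
  forall x : nat -> R, (x 0%nat <> 0 \/ x 1%nat <> 0 \/ x 2%nat <> 0) ->
    0 < (x 0%nat * (A 0%nat 0%nat * x 0%nat + A 0%nat 1%nat * x 1%nat + A 0%nat 2%nat * x 2%nat)
       + x 1%nat * (A 1%nat 0%nat * x 0%nat + A 1%nat 1%nat * x 1%nat + A 1%nat 2%nat * x 2%nat)
       + x 2%nat * (A 2%nat 0%nat * x 0%nat + A 2%nat 1%nat * x 1%nat + A 2%nat 2%nat * x 2%nat)).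

Definition mderiv_at (M : R -> Mat3) (t : R) (D : Mat3) : Prop :=
  forall i j : nat, (i < 3)%nat -> (j < 3)%nat ->
    derivable_pt_lim (fun s => M s i j) t (D i j).
Definition mdifferentiable (M : R -> Mat3) : Prop :=
  forall t i j, (i < 3)%nat -> (j < 3)%nat -> exists l, derivable_pt_lim (fun s => M s i j) t l.

Definition cont3_at (f : R -> R -> R -> R) (a b c : R) : Prop :=
  forall eps, 0 < eps -> exists delta, 0 < delta /\
    forall x y z, Rabs (x - a) < delta -> Rabs (y - b) < delta -> Rabs (z - c) < delta ->
      Rabs (f x y z - f a b c) < eps.

(* Psi is C^1 on the open positive octant (where the invariants of
   positive definite tensors live): continuous partial derivatives. *)
Definition C1_pos (Psi : R -> R -> R -> R) : Prop :=
  exists d1 d2 d3 : R -> R -> R -> R,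
    forall a b c, 0 < a -> 0 < b -> 0 < c ->
      derivable_pt_lim (fun x => Psi x b c) a (d1 a b c) /\
      derivable_pt_lim (fun y => Psi a y c) b (d2 a b c) /\
      derivable_pt_lim (fun z => Psi a b z) c (d3 a b c) /\
      cont3_at d1 a b c /\ cont3_at d2 a b c /\ cont3_at d3 a b c.

(* W(F) = Psi(I1(C), I2(C), I3(C)), C = F^T F;  Wt(X) = Psi(tr X, tr Cof X, det X) *)
Definition Wt (Psi : R -> R -> R -> R) (X : Mat3) : R :=
  Psi (trace X) (trace (cof X)) (det3 X).
Definition Wof (Psi : R -> R -> R -> R) (F : Mat3) : R := Wt Psi (mmul (mtr F) F).

Definition is_gradient (W : Mat3 -> R) (X G : Mat3) : Prop :=
  forall eps, 0 < eps -> exists delta, 0 < delta /\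
    forall H : Mat3, fnorm H < delta ->
      Rabs (W (madd X H) - W X - inner G H) <= eps * fnorm H.

(* Write U := Fp(t) and Fe := F U^-1.  Since the invariants of A B and B A agree,
   W~(C Cp^-1(s)) = W(Fe Q(s)) near t, where Q(s) is the Cholesky factor of
   U Cp^-1(s) U, a curve with Q(t) = I.  The chain rule for the gradient DW(Fe) gives the
   derivative <DW(Fe), Fe Q'(t)>.  Isotropy means W(X R) = W(X) for rotations R, and
   differentiating along rotation curves shows that Fe^T DW(Fe) is symmetric; hence only
   Q' + Q'^T = U (Cp^-1)' U matters, and a conjugation identity turns
   1/2 <Fe^T DW(Fe), U (Cp^-1)' U> into 1/2 <tau_e, F (Cp^-1)' F^T Be^-1>.  Under the flow
   rule the latter collapses to -lambda <tau_e, dev tau_e> / |dev tau_e| = -lambda |dev tau_e|. *)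

(* Imported before [Defs], so that [Defs.symmetric] shadows [Relation_Definitions.symmetric]. *)
From Stdlib Require Import Setoid Morphisms Reals Lra Lia Psatz FunctionalExtensionality.
From Pilot Require Import Defs.
Open Scope R_scope.

(** * Matrix algebra *)

Ltac mat_ext := apply functional_extensionality; intro; apply functional_extensionality; intro.
Ltac destruct_index i := destruct i as [|[|[|i]]]; [ | | | exfalso; lia ].
Ltac mat_entries :=
  let i := fresh "i" in let j := fresh "j" in let Hi := fresh in let Hj := fresh in
  intros i j Hi Hj; destruct_index i; destruct_index j.

Ltac instantiate_entries H :=
  let inst i j := pose proof (H i j ltac:(lia) ltac:(lia)) in
  inst 0%nat 0%nat; inst 0%nat 1%nat; inst 0%nat 2%nat;
  inst 1%nat 0%nat; inst 1%nat 1%nat; inst 1%nat 2%nat;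
  inst 2%nat 0%nat; inst 2%nat 1%nat; inst 2%nat 2%nat.

Definition mzero : Mat3 := fun _ _ => 0.

#[export] Instance mat_eq_equiv : Equivalence mat_eq.
Proof.
  split.
  - intros A i j _ _; reflexivity.
  - intros A B H i j Hi Hj; symmetry; auto.
  - intros A B C H1 H2 i j Hi Hj; rewrite H1, H2; auto.
Qed.

#[export] Instance mmul_proper : Proper (mat_eq ==> mat_eq ==> mat_eq) mmul.
Proof. intros A A' HA B B' HB i j Hi Hj; unfold mmul; rewrite !HA, !HB by lia; reflexivity. Qed.
#[export] Instance madd_proper : Proper (mat_eq ==> mat_eq ==> mat_eq) madd.
Proof. intros A A' HA B B' HB i j Hi Hj; unfold madd; rewrite HA, HB by lia; reflexivity. Qed.
#[export] Instance mscal_proper : Proper (eq ==> mat_eq ==> mat_eq) mscal.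
Proof. intros a _ <- A A' HA i j Hi Hj; unfold mscal; rewrite HA by lia; reflexivity. Qed.
#[export] Instance mtr_proper : Proper (mat_eq ==> mat_eq) mtr.
Proof. intros A A' HA i j Hi Hj; unfold mtr; rewrite HA by lia; reflexivity. Qed.
#[export] Instance trace_proper : Proper (mat_eq ==> eq) trace.
Proof. intros A A' HA; unfold trace; rewrite !HA by lia; reflexivity. Qed.
#[export] Instance det3_proper : Proper (mat_eq ==> eq) det3.
Proof. intros A A' HA; unfold det3; rewrite !HA by lia; reflexivity. Qed.
#[export] Instance cof_proper : Proper (mat_eq ==> mat_eq) cof.
Proof.
  intros A A' HA i j Hi Hj; unfold cof.
  rewrite !HA by (apply Nat.mod_upper_bound; lia); reflexivity.
Qed.
#[export] Instance minv_proper : Proper (mat_eq ==> mat_eq) minv.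
Proof. intros A A' HA; unfold minv; rewrite HA; reflexivity. Qed.
#[export] Instance inner_proper : Proper (mat_eq ==> mat_eq ==> eq) inner.
Proof. intros A A' HA B B' HB; unfold inner; rewrite HA, HB; reflexivity. Qed.
#[export] Instance Wt_proper Psi : Proper (mat_eq ==> eq) (Wt Psi).
Proof. intros A A' HA; unfold Wt; rewrite HA; reflexivity. Qed.
#[export] Instance Wof_proper Psi : Proper (mat_eq ==> eq) (Wof Psi).
Proof. intros A A' HA; unfold Wof; rewrite HA; reflexivity. Qed.

Lemma mmul_assoc A B C : mmul (mmul A B) C = mmul A (mmul B C).
Proof. mat_ext; unfold mmul; ring. Qed.
Lemma mtr_mmul A B : mtr (mmul A B) = mmul (mtr B) (mtr A).
Proof. mat_ext; unfold mtr, mmul; ring. Qed.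
Lemma mtr_idm : mtr idm = idm.
Proof. mat_ext; unfold mtr, idm; rewrite Nat.eqb_sym; reflexivity. Qed.
Lemma mmul_1l A : mat_eq (mmul idm A) A.
Proof. mat_entries; unfold mmul, idm; simpl; ring. Qed.
Lemma mmul_1r A : mat_eq (mmul A idm) A.
Proof. mat_entries; unfold mmul, idm; simpl; ring. Qed.
Lemma mmul_scal_l c A B : mmul (mscal c A) B = mscal c (mmul A B).
Proof. mat_ext; unfold mmul, mscal; ring. Qed.
Lemma mmul_scal_r c A B : mmul A (mscal c B) = mscal c (mmul A B).
Proof. mat_ext; unfold mmul, mscal; ring. Qed.
Lemma mscal_mscal a b A : mscal a (mscal b A) = mscal (a * b) A.
Proof. mat_ext; unfold mscal; ring. Qed.

Lemma det3_mmul A B : det3 (mmul A B) = det3 A * det3 B.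
Proof. unfold det3, mmul; ring. Qed.
Lemma det3_mtr A : det3 (mtr A) = det3 A.
Proof. unfold det3, mtr; ring. Qed.
Lemma trace_mmulC A B : trace (mmul A B) = trace (mmul B A).
Proof. unfold trace, mmul; ring. Qed.
Lemma trace_cof_mmulC A B : trace (cof (mmul A B)) = trace (cof (mmul B A)).
Proof. unfold trace, cof, mmul; simpl; ring. Qed.

Lemma Wt_mmulC Psi A B : Wt Psi (mmul A B) = Wt Psi (mmul B A).
Proof. unfold Wt; rewrite trace_mmulC, trace_cof_mmulC, !det3_mmul, Rmult_comm; reflexivity. Qed.

Lemma cof_mmul A B : mat_eq (cof (mmul A B)) (mmul (cof A) (cof B)).
Proof. mat_entries; unfold cof, mmul; simpl; ring. Qed.
Lemma cof_mtr A : cof (mtr A) = mtr (cof A).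
Proof. mat_ext; unfold cof, mtr; ring. Qed.

Lemma minv_l A : det3 A <> 0 -> mat_eq (mmul (minv A) A) idm.
Proof.
  intros H; mat_entries; unfold mmul, minv, mscal, mtr, cof, idm; simpl; unfold det3 in *; field; auto.
Qed.
Lemma minv_r A : det3 A <> 0 -> mat_eq (mmul A (minv A)) idm.
Proof.
  intros H; mat_entries; unfold mmul, minv, mscal, mtr, cof, idm; simpl; unfold det3 in *; field; auto.
Qed.

Lemma minv_unique X A : det3 A <> 0 -> mat_eq (mmul X A) idm -> mat_eq X (minv A).
Proof.
  intros HA H.
  rewrite <- (mmul_1r X), <- (minv_r A HA), <- mmul_assoc, H.
  apply mmul_1l.
Qed.

(* No invertibility needed: [/ (a * b) = / a * / b] holds for all reals. *)
Lemma minv_mmul A B : mat_eq (minv (mmul A B)) (mmul (minv B) (minv A)).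
Proof.
  unfold minv. rewrite det3_mmul, Rinv_mult, cof_mmul, mtr_mmul, mmul_scal_l, mmul_scal_r, mscal_mscal.
  rewrite Rmult_comm; reflexivity.
Qed.
Lemma minv_mtr A : minv (mtr A) = mtr (minv A).
Proof. unfold minv; rewrite det3_mtr, cof_mtr; mat_ext; reflexivity. Qed.

Lemma det3_minv A : det3 A <> 0 -> det3 (minv A) = / det3 A.
Proof.
  intros H.
  apply Rmult_eq_reg_l with (det3 A); auto.
  rewrite <- det3_mmul, minv_r, Rinv_r by auto.
  unfold det3, idm; simpl; ring.
Qed.

Lemma minv_involutive A : det3 A <> 0 -> mat_eq (minv (minv A)) A.
Proof.
  intros H. symmetry. apply minv_unique; [|apply minv_r; auto].
  rewrite det3_minv by auto. apply Rinv_neq_0_compat; auto.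
Qed.

Lemma minv_symmetric A : symmetric A -> symmetric (minv A).
Proof. unfold symmetric; intros H; rewrite <- minv_mtr, H; reflexivity. Qed.

Lemma inner_mtr_r X Y : inner X (mtr Y) = inner (mtr X) Y.
Proof. unfold inner, trace, mmul, mtr; ring. Qed.
Lemma inner_madd_r X Y Z : inner X (madd Y Z) = inner X Y + inner X Z.
Proof. unfold inner, trace, mmul, mtr, madd; ring. Qed.
Lemma inner_mscal_r X a Y : inner X (mscal a Y) = a * inner X Y.
Proof. unfold inner, trace, mmul, mtr, mscal; ring. Qed.
Lemma inner_mmul_r X A B : inner X (mmul A B) = inner (mmul (mtr A) X) B.
Proof. unfold inner, trace, mmul, mtr; ring. Qed.
Lemma inner_mzero_r X : inner X mzero = 0.
Proof. unfold inner, trace, mmul, mtr, mzero; ring. Qed.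

Lemma inner_symmetric_half S L : symmetric S -> inner S L = / 2 * inner S (madd L (mtr L)).
Proof. unfold symmetric; intros HS; rewrite inner_madd_r, inner_mtr_r, HS; field. Qed.

Lemma inner_conj G A X : det3 A <> 0 ->
  inner (mmul G (mtr A)) (mmul A (mmul X (minv A))) = inner (mmul (mtr A) G) X.
Proof.
  intros H. unfold inner.
  rewrite !mtr_mmul, <- minv_mtr, !mmul_assoc.
  rewrite <- (mmul_assoc (mtr A) (minv (mtr A))), minv_r, mmul_1l by (rewrite det3_mtr; auto).
  rewrite <- (mmul_assoc G), trace_mmulC; reflexivity.
Qed.

Lemma mmul_cancel_l A B X : mat_eq (mmul A B) idm -> mat_eq (mmul A (mmul B X)) X.
Proof. intros H; rewrite <- mmul_assoc, H; apply mmul_1l. Qed.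

Lemma mtr_minv_l A : det3 A <> 0 -> mat_eq (mmul (mtr A) (mtr (minv A))) idm.
Proof. intros H; rewrite <- mtr_mmul, minv_l, mtr_idm by auto; reflexivity. Qed.
Lemma mtr_minv_r A : det3 A <> 0 -> mat_eq (mmul (mtr (minv A)) (mtr A)) idm.
Proof. intros H; rewrite <- mtr_mmul, minv_r, mtr_idm by auto; reflexivity. Qed.

Lemma symmetric_congruence U P : symmetric P -> symmetric (mmul (mmul U P) (mtr U)).
Proof. unfold symmetric; intros HP; rewrite !mtr_mmul, HP, mmul_assoc; reflexivity. Qed.

Definition vec3 (a b c : R) : nat -> R :=
  fun i => match i with O => a | S O => b | _ => c end.

(* Sylvester: the quadratic form at [e_0], at [(-A01, A00, 0)] and at the last row of
   the cofactor matrix equals [A00], [A00 * cof22] and [cof22 * det A]. *)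
Lemma psym_det_pos A : psym A -> 0 < det3 A.
Proof.
  intros [_ Hq].
  assert (H00 : 0 < A 0%nat 0%nat).
  { assert (H := Hq (vec3 1 0 0) ltac:(left; simpl; lra)). simpl in H. lra. }
  assert (Hc : 0 < cof A 2%nat 2%nat).
  { assert (H := Hq (vec3 (- A 0%nat 1%nat) (A 0%nat 0%nat) 0) ltac:(right; left; simpl; lra)).
    simpl in H. unfold cof; simpl. nra. }
  assert (H := Hq (vec3 (cof A 2%nat 0%nat) (cof A 2%nat 1%nat) (cof A 2%nat 2%nat))
                  ltac:(right; right; simpl; lra)).
  simpl in H.
  match type of H with 0 < ?e => replace e with (cof A 2%nat 2%nat * det3 A) in H
    by (unfold cof, det3; simpl; ring) end.
  nra.
Qed.



Lemma inner_dev3 X : inner X (dev3 X) = inner (dev3 X) (dev3 X).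
Proof. unfold inner, dev3, madd, mscal, idm, trace, mmul, mtr; simpl; field. Qed.

Lemma inner_self_pos X : ~ mat_eq X mzero -> 0 < inner X X.
Proof.
  intros H. destruct (Rlt_or_le 0 (inner X X)) as [h|h]; auto.
  exfalso; apply H. unfold inner, trace, mmul, mtr in h.
  mat_entries; unfold mzero; nra.
Qed.

Lemma fnorm_nonneg A : 0 <= fnorm A.
Proof. apply sqrt_pos. Qed.

Lemma fnorm_bound_entries M c :
  (forall i j, (i < 3)%nat -> (j < 3)%nat -> Rabs (M i j) <= c) -> fnorm M <= 3 * c.
Proof.
  intros H.
  assert (Hc : 0 <= c) by (eapply Rle_trans; [apply Rabs_pos | apply (H 0%nat 0%nat); lia]).
  assert (Hsq : forall i j, (i < 3)%nat -> (j < 3)%nat -> M i j * M i j <= c * c).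
  { intros i j Hi Hj. apply Rsqr_le_abs_1. rewrite (Rabs_pos_eq c Hc). auto. }
  unfold fnorm. rewrite <- (sqrt_square (3 * c)) by lra. apply sqrt_le_1_alt.
  unfold inner, trace, mmul, mtr.
  instantiate_entries Hsq. lra.
Qed.

Lemma entry_le_fnorm A i j : (i < 3)%nat -> (j < 3)%nat -> Rabs (A i j) <= fnorm A.
Proof.
  intros Hi Hj. rewrite <- sqrt_Rsqr_abs. apply sqrt_le_1_alt.
  unfold Rsqr, inner, trace, mmul, mtr.
  destruct_index i; destruct_index j; nra.
Qed.

(** * Local analysis at a point *)

Definition near (t : R) (P : R -> Prop) : Prop :=
  exists d, 0 < d /\ forall s, Rabs (s - t) < d -> P s.

Lemma near_ball t d : 0 < d -> near t (fun s => Rabs (s - t) < d).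
Proof. intros Hd; exists d; auto. Qed.

Lemma near_mono t (P Q : R -> Prop) : (forall s, P s -> Q s) -> near t P -> near t Q.
Proof. intros H [d [Hd HP]]; exists d; auto. Qed.

Lemma near_and t P Q : near t P -> near t Q -> near t (fun s => P s /\ Q s).
Proof.
  intros [d1 [Hd1 H1]] [d2 [Hd2 H2]].
  exists (Rmin d1 d2); split; [apply Rmin_pos; auto|].
  intros s Hs; split; [apply H1 | apply H2];
    eapply Rlt_le_trans; eauto; [apply Rmin_l | apply Rmin_r].
Qed.

Lemma near_entries t (P : nat -> nat -> R -> Prop) :
  (forall i j, (i < 3)%nat -> (j < 3)%nat -> near t (P i j)) ->
  near t (fun s => forall i j, (i < 3)%nat -> (j < 3)%nat -> P i j s).
Proof.
  intros H.
  assert (Hall : near t (fun s =>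
    P 0 0 s /\ P 0 1 s /\ P 0 2 s /\ P 1 0 s /\ P 1 1 s /\ P 1 2 s /\
    P 2 0 s /\ P 2 1 s /\ P 2 2 s)%nat)
    by (repeat apply near_and; apply H; lia).
  eapply near_mono; [|exact Hall].
  intros s Hs i j Hi Hj; cbv beta in Hs; destruct_index i; destruct_index j; tauto.
Qed.

Lemma derivable_pt_lim_near_ext f g t l :
  near t (fun s => f s = g s) -> derivable_pt_lim f t l -> derivable_pt_lim g t l.
Proof.
  intros [d [Hd H]]. apply derivable_pt_lim_locally_ext with (t - d) (t + d); [lra|].
  intros s Hs; apply H, Rabs_def1; lra.
Qed.

Lemma derivable_pt_lim_taylor f t l : derivable_pt_lim f t l ->
  forall eps, 0 < eps -> near t (fun s => Rabs (f s - f t - l * (s - t)) <= eps * Rabs (s - t)).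
Proof.
  intros Hf eps Heps. destruct (Hf eps Heps) as [d Hd].
  exists d; split; [apply cond_pos|]. intros s Hs.
  destruct (Req_dec s t) as [->|Hne].
  { replace (f t - f t - l * (t - t)) with 0 by ring.
    rewrite Rabs_R0. apply Rmult_le_pos; [lra | apply Rabs_pos]. }
  assert (Hst : s - t <> 0) by (intro E; apply Hne; lra).
  specialize (Hd (s - t) Hst Hs). replace (t + (s - t)) with s in Hd by ring.
  replace (f s - f t - l * (s - t)) with (((f s - f t) / (s - t) - l) * (s - t)) by (field; auto).
  rewrite Rabs_mult. apply Rmult_le_compat_r; [apply Rabs_pos | lra].
Qed.

Lemma derivable_pt_lim_lipschitz f t l : derivable_pt_lim f t l ->
  near t (fun s => Rabs (f s - f t) <= (Rabs l + 1) * Rabs (s - t)).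
Proof.
  intros Hf. eapply near_mono; [|apply (derivable_pt_lim_taylor f t l Hf 1); lra].
  intros s Hs.
  replace (f s - f t) with ((f s - f t - l * (s - t)) + l * (s - t)) by ring.
  eapply Rle_trans; [apply Rabs_triang|]. rewrite Rabs_mult. lra.
Qed.

Lemma derivable_pt_lim_near_pos f t l : derivable_pt_lim f t l -> 0 < f t -> near t (fun s => 0 < f s).
Proof.
  intros Hf Hpos. set (K := Rabs l + 1).
  assert (HK : 0 < K) by (unfold K; pose proof (Rabs_pos l); lra).
  eapply near_mono; [|apply near_and; [apply (derivable_pt_lim_lipschitz f t l Hf)
                                      | apply (near_ball t (f t / K)), Rdiv_lt_0_compat; auto]].
  intros s [Hlip Hball]. fold K in Hlip.
  assert (K * Rabs (s - t) < f t).
  { apply Rmult_lt_compat_l with (r := K) in Hball; auto.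
    replace (K * (f t / K)) with (f t) in Hball by (field; lra). lra. }
  pose proof (Rle_abs (f t - f s)) as Hle. rewrite Rabs_minus_sym in Hle. lra.
Qed.

Lemma derivable_pt_lim_little_o f t : f t = 0 ->
  (forall eps, 0 < eps -> near t (fun s => Rabs (f s) <= eps * Rabs (s - t))) ->
  derivable_pt_lim f t 0.
Proof.
  intros H0 Ho eps Heps.
  destruct (Ho (eps / 2) ltac:(lra)) as [d [Hd H]].
  exists (mkposreal d Hd); simpl. intros h Hh Hhd.
  assert (Hbound := H (t + h) ltac:(replace (t + h - t) with h by ring; exact Hhd)).
  replace (t + h - t) with h in Hbound by ring.
  assert (Habs : 0 < Rabs h) by (apply Rabs_pos_lt; auto).
  rewrite H0, !Rminus_0_r. unfold Rdiv. rewrite Rabs_mult, Rabs_inv.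
  apply Rle_lt_trans with (eps / 2 * Rabs h * / Rabs h).
  - apply Rmult_le_compat_r; auto. left; apply Rinv_0_lt_compat; auto.
  - replace (eps / 2 * Rabs h * / Rabs h) with (eps / 2) by (field; lra). lra.
Qed.

Lemma derivable_pt_lim_sqrt_at_1 f t a : derivable_pt_lim f t a -> f t = 1 ->
  derivable_pt_lim (fun s => sqrt (f s)) t (a / 2).
Proof.
  intros Hf H1.
  assert (H := derivable_pt_lim_comp f sqrt t a _ Hf (derivable_pt_lim_sqrt (f t) ltac:(lra))).
  rewrite H1, sqrt_1 in H. replace (a / 2) with (/ (2 * 1) * a) by field. exact H.
Qed.

Lemma derivable_pt_lim_div_at_01 f g t a b : derivable_pt_lim f t a -> derivable_pt_lim g t b ->
  f t = 0 -> g t = 1 -> derivable_pt_lim (fun s => f s / g s) t a.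
Proof.
  intros Hf Hg H0 H1.
  assert (H := derivable_pt_lim_div f g t a b Hf Hg ltac:(lra)).
  rewrite H0, H1 in H. replace a with ((a * 1 - b * 0) / Rsqr 1) by (unfold Rsqr; field). exact H.
Qed.

Lemma derivable_pt_lim_minus_mult_at_0 f g h t a b c : derivable_pt_lim f t a ->
  derivable_pt_lim g t b -> derivable_pt_lim h t c -> g t = 0 -> h t = 0 ->
  derivable_pt_lim (fun s => f s - g s * h s) t a.
Proof.
  intros Hf Hg Hh Hg0 Hh0.
  replace a with (a - (b * h t + g t * c)) by (rewrite Hg0, Hh0; ring).
  apply derivable_pt_lim_minus; [exact Hf | apply derivable_pt_lim_mult; auto].
Qed.

Lemma mderiv_mmul_l A M t D : mderiv_at M t D -> mderiv_at (fun s => mmul A (M s)) t (mmul A D).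
Proof.
  intros H i j Hi Hj; unfold mmul.
  repeat apply derivable_pt_lim_plus; apply derivable_pt_lim_scal, H; auto.
Qed.

Lemma mderiv_mmul_r A M t D : mderiv_at M t D -> mderiv_at (fun s => mmul (M s) A) t (mmul D A).
Proof.
  intros H i j Hi Hj; unfold mmul.
  repeat apply derivable_pt_lim_plus; apply derivable_pt_lim_scal_right, H; auto.
Qed.

Lemma mderiv_sub_const M t D X : mderiv_at M t D ->
  mderiv_at (fun s => madd (M s) (mscal (-1) X)) t D.
Proof.
  intros H i j Hi Hj; unfold madd, mscal.
  rewrite <- (Rplus_0_r (D i j)).
  apply derivable_pt_lim_plus; [apply H; auto | apply derivable_pt_lim_const].
Qed.

Lemma mderiv_symmetric M t D : (forall s, symmetric (M s)) -> mderiv_at M t D -> symmetric D.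
Proof.
  intros HM HD i j Hi Hj; unfold mtr.
  apply (uniqueness_limite (fun s => M s i j) t); [|apply HD; auto].
  apply derivable_pt_lim_ext with (fun s => M s j i); [intros s; apply (HM s); auto | apply HD; auto].
Qed.

Lemma derivable_pt_lim_inner G M t D : mderiv_at M t D ->
  derivable_pt_lim (fun s => inner G (M s)) t (inner G D).
Proof.
  intros H; unfold inner, trace, mmul, mtr.
  repeat apply derivable_pt_lim_plus; apply derivable_pt_lim_scal, H; lia.
Qed.

Lemma mderiv_fnorm_lipschitz M D t : mderiv_at M t D -> mat_eq (M t) mzero ->
  near t (fun s => fnorm (M s) <= 3 * (fnorm D + 1) * Rabs (s - t)).
Proof.
  intros HM H0.
  eapply near_mono; [|apply near_entries; intros i j Hi Hj;
                      apply (derivable_pt_lim_lipschitz (fun s => M s i j)), HM; auto].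
  intros s Hs. rewrite Rmult_assoc. apply fnorm_bound_entries. intros i j Hi Hj.
  specialize (Hs i j Hi Hj); cbv beta in Hs. rewrite H0 in Hs by auto.
  unfold mzero in Hs; rewrite Rminus_0_r in Hs.
  eapply Rle_trans; [exact Hs|]. apply Rmult_le_compat_r; [apply Rabs_pos|].
  pose proof (entry_le_fnorm D i j Hi Hj); lra.
Qed.

Lemma gradient_chain_rule W X G Y D t :
  Proper (mat_eq ==> eq) W -> is_gradient W X G -> mat_eq (Y t) X -> mderiv_at Y t D ->
  derivable_pt_lim (fun s => W (Y s)) t (inner G D).
Proof.
  intros HW HG HYt HY.
  set (M := fun s => madd (Y s) (mscal (-1) X)).
  assert (HM : mderiv_at M t D) by (apply mderiv_sub_const; auto).
  assert (HM0 : mat_eq (M t) mzero).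
  { unfold M; rewrite HYt; intros i j _ _; unfold madd, mscal, mzero; ring. }
  assert (HYM : forall s, mat_eq (Y s) (madd X (M s))).
  { intros s i j _ _; unfold M, madd, mscal; ring. }
  set (r := fun s => W (Y s) - W X - inner G (M s)).
  assert (Hr : derivable_pt_lim r t 0).
  { apply derivable_pt_lim_little_o.
    { unfold r; rewrite HYt, HM0, inner_mzero_r; ring. }
    intros eps Heps. set (K := 3 * (fnorm D + 1)).
    assert (HK : 0 < K) by (unfold K; pose proof (fnorm_nonneg D); lra).
    destruct (HG (eps / K) ltac:(apply Rdiv_lt_0_compat; auto)) as [d [Hd Hgrad]].
    eapply near_mono; [|apply near_and; [apply (mderiv_fnorm_lipschitz M D t HM HM0)
                                        | apply (near_ball t (d / K)), Rdiv_lt_0_compat; auto]].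
    intros s [Hlip Hball]. fold K in Hlip.
    assert (Hsmall : fnorm (M s) < d).
    { apply Rmult_lt_compat_l with (r := K) in Hball; auto.
      replace (K * (d / K)) with d in Hball by (field; lra). lra. }
    unfold r; rewrite (HYM s) at 1.
    eapply Rle_trans; [apply Hgrad, Hsmall|].
    replace (eps * Rabs (s - t)) with (eps / K * (K * Rabs (s - t))) by (field; lra).
    apply Rmult_le_compat_l; auto. left; apply Rdiv_lt_0_compat; auto. }
  apply derivable_pt_lim_ext with (fun s => r s + (W X + inner G (M s))).
  { intros s; unfold r; ring. }
  replace (inner G D) with (0 + (0 + inner G D)) by ring.
  apply derivable_pt_lim_plus; [exact Hr|].
  apply derivable_pt_lim_plus; [apply derivable_pt_lim_const | apply derivable_pt_lim_inner; exact HM].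
Qed.

(** * Isotropy: symmetry of [Fe^T DW(Fe)] *)

Definition orthogonal (Q : Mat3) : Prop := mat_eq (mmul Q (mtr Q)) idm.

Lemma Wof_mmul_orthogonal Psi X Q : orthogonal Q -> Wof Psi (mmul X Q) = Wof Psi X.
Proof.
  unfold orthogonal, Wof; intros H.
  rewrite mtr_mmul, mmul_assoc, Wt_mmulC, !mmul_assoc, H, mmul_1r; reflexivity.
Qed.

Definition rot (p q : nat) (s : R) : Mat3 := fun i j =>
  if orb (andb (i =? p) (j =? p)) (andb (i =? q) (j =? q)) then cos s
  else if andb (i =? p) (j =? q) then - sin s
  else if andb (i =? q) (j =? p) then sin s
  else idm i j.

Definition skew_unit (p q : nat) : Mat3 := fun i j =>
  if andb (i =? p) (j =? q) then -1
  else if andb (i =? q) (j =? p) then 1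
  else 0.

Ltac destruct_pair p q :=
  destruct_index q; destruct_index p; try (exfalso; lia).

Lemma rot_orthogonal p q s : (p < q < 3)%nat -> orthogonal (rot p q s).
Proof.
  intros Hpq. pose proof (sin2_cos2 s) as E. unfold Rsqr in E.
  destruct_pair p q; mat_entries; unfold mmul, mtr, rot, idm; simpl; nra.
Qed.

Lemma rot_0 p q : (p < q < 3)%nat -> mat_eq (rot p q 0) idm.
Proof.
  intros Hpq; destruct_pair p q; mat_entries; unfold rot, idm; simpl;
    rewrite ?cos_0, ?sin_0; ring.
Qed.

Lemma rot_deriv p q : (p < q < 3)%nat -> mderiv_at (rot p q) 0 (skew_unit p q).
Proof.
  assert (Dcos : derivable_pt_lim cos 0 0)
    by (replace 0 with (- sin 0) at 2 by (rewrite sin_0; ring); apply derivable_pt_lim_cos).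
  assert (Dsin : derivable_pt_lim sin 0 1) by (rewrite <- cos_0; apply derivable_pt_lim_sin).
  assert (Dmsin : derivable_pt_lim (fun s => - sin s) 0 (-1))
    by (apply (derivable_pt_lim_opp sin); exact Dsin).
  intros Hpq; destruct_pair p q; mat_entries; unfold rot, skew_unit, idm; simpl;
    first [exact Dcos | exact Dsin | exact Dmsin | apply derivable_pt_lim_const].
Qed.

Lemma symmetric_of_skew_orthogonal S :
  (forall p q, (p < q < 3)%nat -> inner S (skew_unit p q) = 0) -> symmetric S.
Proof.
  intros H.
  assert (H01 := H 0%nat 1%nat ltac:(lia)).
  assert (H02 := H 0%nat 2%nat ltac:(lia)).
  assert (H12 := H 1%nat 2%nat ltac:(lia)).
  unfold inner, trace, mmul, mtr, skew_unit in H01, H02, H12; simpl in H01, H02, H12.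
  mat_entries; unfold mtr; lra.
Qed.

(* Differentiating [s |-> W (X rot(s))], constant by invariance, kills the skew part of [X^T DW(X)]. *)
Lemma gradient_right_invariant_symmetric W X G :
  Proper (mat_eq ==> eq) W -> (forall Y Q, orthogonal Q -> W (mmul Y Q) = W Y) ->
  is_gradient W X G -> symmetric (mmul (mtr X) G).
Proof.
  intros HW Hinv HG. apply symmetric_of_skew_orthogonal. intros p q Hpq.
  rewrite <- inner_mmul_r.
  apply (uniqueness_limite (fun s => W (mmul X (rot p q s))) 0).
  - apply (gradient_chain_rule W X); auto.
    + rewrite rot_0, mmul_1r by auto; reflexivity.
    + apply mderiv_mmul_l, rot_deriv; auto.
  - apply derivable_pt_lim_ext with (fun _ => W X); [|apply derivable_pt_lim_const].
    intros s; symmetry; apply Hinv, rot_orthogonal; auto.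
Qed.

(** * Cholesky factor of a curve through the identity *)

Definition chol00 (N : Mat3) : R := sqrt (N 0%nat 0%nat).
Definition chol10 (N : Mat3) : R := N 1%nat 0%nat / chol00 N.
Definition chol20 (N : Mat3) : R := N 2%nat 0%nat / chol00 N.
Definition pivot1 (N : Mat3) : R := N 1%nat 1%nat - chol10 N * chol10 N.
Definition chol11 (N : Mat3) : R := sqrt (pivot1 N).
Definition chol21 (N : Mat3) : R := (N 2%nat 1%nat - chol20 N * chol10 N) / chol11 N.
Definition pivot2 (N : Mat3) : R := N 2%nat 2%nat - chol20 N * chol20 N - chol21 N * chol21 N.
Definition chol22 (N : Mat3) : R := sqrt (pivot2 N).

Definition chol (N : Mat3) : Mat3 := fun i j =>
  match i, j with
  | O, O => chol00 N
  | S O, O => chol10 N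
  | S O, S O => chol11 N
  | S (S O), O => chol20 N
  | S (S O), S O => chol21 N
  | S (S O), S (S O) => chol22 N
  | _, _ => 0
  end.

Definition lower_half (D : Mat3) : Mat3 := fun i j =>
  if (j <? i)%nat then D i j else if (i =? j)%nat then D i j / 2 else 0.

Lemma chol_mmul_mtr N : symmetric N -> 0 < N 0%nat 0%nat -> 0 < pivot1 N -> 0 < pivot2 N ->
  mat_eq (mmul (chol N) (mtr (chol N))) N.
Proof.
  intros HN H0 H1 H2.
  assert (P0 : 0 < chol00 N) by (apply sqrt_lt_R0; auto).
  assert (P1 : 0 < chol11 N) by (apply sqrt_lt_R0; auto).
  assert (E00 : chol00 N * chol00 N = N 0%nat 0%nat) by (apply sqrt_sqrt; lra).
  assert (E10 : chol10 N * chol00 N = N 1%nat 0%nat) by (unfold chol10; field; lra).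
  assert (E20 : chol20 N * chol00 N = N 2%nat 0%nat) by (unfold chol20; field; lra).
  assert (E11 : chol10 N * chol10 N + chol11 N * chol11 N = N 1%nat 1%nat)
    by (unfold chol11; rewrite sqrt_sqrt by lra; unfold pivot1; ring).
  assert (E21 : chol20 N * chol10 N + chol21 N * chol11 N = N 2%nat 1%nat)
    by (unfold chol21; field; lra).
  assert (E22 : chol20 N * chol20 N + chol21 N * chol21 N + chol22 N * chol22 N = N 2%nat 2%nat)
    by (unfold chol22; rewrite sqrt_sqrt by lra; unfold pivot2; ring).
  instantiate_entries HN. unfold mtr in *.
  mat_entries; unfold mmul, mtr, chol; simpl; lra.
Qed.

Lemma lower_half_symmetric D : symmetric D -> mat_eq (madd (lower_half D) (mtr (lower_half D))) D.
Proof.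
  intros HD. instantiate_entries HD. unfold mtr in *.
  mat_entries; unfold madd, mtr, lower_half; simpl; lra.
Qed.

Lemma chol_idm_values N : mat_eq N idm ->
  chol00 N = 1 /\ chol10 N = 0 /\ chol20 N = 0 /\ pivot1 N = 1 /\
  chol11 N = 1 /\ chol21 N = 0 /\ pivot2 N = 1 /\ chol22 N = 1.
Proof.
  intros HN.
  assert (V00 : chol00 N = 1) by (unfold chol00; rewrite HN by lia; apply sqrt_1).
  assert (V10 : chol10 N = 0) by (unfold chol10; rewrite HN, V00 by lia; unfold idm; simpl; field).
  assert (V20 : chol20 N = 0) by (unfold chol20; rewrite HN, V00 by lia; unfold idm; simpl; field).
  assert (V1 : pivot1 N = 1) by (unfold pivot1; rewrite HN, V10 by lia; unfold idm; simpl; ring).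
  assert (V11 : chol11 N = 1) by (unfold chol11; rewrite V1; apply sqrt_1).
  assert (V21 : chol21 N = 0)
    by (unfold chol21; rewrite HN, V20, V10, V11 by lia; unfold idm; simpl; field).
  assert (V2 : pivot2 N = 1) by (unfold pivot2; rewrite HN, V20, V21 by lia; unfold idm; simpl; ring).
  assert (V22 : chol22 N = 1) by (unfold chol22; rewrite V2; apply sqrt_1).
  tauto.
Qed.

Lemma chol_deriv N D t : mderiv_at N t D -> mat_eq (N t) idm ->
  mderiv_at (fun s => chol (N s)) t (lower_half D) /\
  derivable_pt_lim (fun s => pivot1 (N s)) t (D 1%nat 1%nat) /\
  derivable_pt_lim (fun s => pivot2 (N s)) t (D 2%nat 2%nat).
Proof.
  intros HN Ht.
  destruct (chol_idm_values (N t) Ht) as (V00 & V10 & V20 & V1 & V11 & V21 & V2 & V22).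
  assert (D00 : derivable_pt_lim (fun s => chol00 (N s)) t (D 0%nat 0%nat / 2))
    by (apply derivable_pt_lim_sqrt_at_1; [apply HN | rewrite Ht]; auto).
  assert (D10 : derivable_pt_lim (fun s => chol10 (N s)) t (D 1%nat 0%nat))
    by (eapply derivable_pt_lim_div_at_01; [apply HN | exact D00 | rewrite Ht | ]; auto).
  assert (D20 : derivable_pt_lim (fun s => chol20 (N s)) t (D 2%nat 0%nat))
    by (eapply derivable_pt_lim_div_at_01; [apply HN | exact D00 | rewrite Ht | ]; auto).
  assert (P1 : derivable_pt_lim (fun s => pivot1 (N s)) t (D 1%nat 1%nat))
    by (eapply derivable_pt_lim_minus_mult_at_0; [apply HN | exact D10 | exact D10 | |]; auto).
  assert (D11 : derivable_pt_lim (fun s => chol11 (N s)) t (D 1%nat 1%nat / 2))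
    by (apply derivable_pt_lim_sqrt_at_1; auto).
  assert (D21 : derivable_pt_lim (fun s => chol21 (N s)) t (D 2%nat 1%nat)).
  { eapply derivable_pt_lim_div_at_01; [| exact D11 | | exact V11].
    - eapply derivable_pt_lim_minus_mult_at_0; [apply HN | exact D20 | exact D10 | |]; auto.
    - rewrite Ht, V20 by lia; unfold idm; simpl; ring. }
  assert (P2 : derivable_pt_lim (fun s => pivot2 (N s)) t (D 2%nat 2%nat)).
  { unfold pivot2. eapply derivable_pt_lim_minus_mult_at_0; [| exact D21 | exact D21 | |]; auto.
    eapply derivable_pt_lim_minus_mult_at_0; [apply HN | exact D20 | exact D20 | |]; auto. }
  assert (D22 : derivable_pt_lim (fun s => chol22 (N s)) t (D 2%nat 2%nat / 2))
    by (apply derivable_pt_lim_sqrt_at_1; auto).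
  split; [|auto].
  mat_entries; unfold chol, lower_half; simpl; first [apply derivable_pt_lim_const | assumption].
Qed.

Lemma chol_curve N D t : (forall s, symmetric (N s)) -> mderiv_at N t D -> mat_eq (N t) idm ->
  near t (fun s => mat_eq (mmul (chol (N s)) (mtr (chol (N s)))) (N s)) /\
  mat_eq (chol (N t)) idm /\ mderiv_at (fun s => chol (N s)) t (lower_half D).
Proof.
  intros HNs HN Ht.
  destruct (chol_deriv N D t HN Ht) as (HQ & P1 & P2).
  destruct (chol_idm_values (N t) Ht) as (V00 & V10 & V20 & V1 & V11 & V21 & V2 & V22).
  split; [|split; [|exact HQ]].
  - assert (H00 : near t (fun s => 0 < N s 0%nat 0%nat)).
    { apply (derivable_pt_lim_near_pos _ t (D 0%nat 0%nat)); [apply HN; lia|].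
      rewrite Ht by lia; unfold idm; simpl; lra. }
    assert (H1 := derivable_pt_lim_near_pos _ t _ P1 ltac:(cbv beta; lra)).
    assert (H2 := derivable_pt_lim_near_pos _ t _ P2 ltac:(cbv beta; lra)).
    eapply near_mono; [|apply near_and; [exact H00 | apply near_and; [exact H1 | exact H2]]].
    intros s (Hs0 & Hs1 & Hs2). apply chol_mmul_mtr; auto.
  - mat_entries; unfold chol, idm; simpl; auto.
Qed.

(** * The dissipation formula *)

Lemma Wof_factor Psi F U P Q : det3 U <> 0 ->
  mat_eq (mmul Q (mtr Q)) (mmul (mmul U P) (mtr U)) ->
  Wof Psi (mmul (mmul F (minv U)) Q) = Wt Psi (mmul (mmul (mtr F) F) P).
Proof.
  intros HU HQ. unfold Wof.
  rewrite Wt_mmulC, mtr_mmul, mmul_assoc, <- (mmul_assoc Q), HQ, mtr_mmul, !mmul_assoc.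
  rewrite (mmul_cancel_l _ _ _ (minv_l U HU)), (mmul_cancel_l _ _ _ (mtr_minv_l U HU)).
  rewrite (Wt_mmulC Psi (mtr F)), mmul_assoc; reflexivity.
Qed.

Lemma Wt_Cpinv_deriv Psi F Cp U D G t :
  det3 U <> 0 -> symmetric U -> (forall s, symmetric (Cp s)) -> mat_eq (mmul U U) (Cp t) ->
  mderiv_at (fun s => minv (Cp s)) t D -> is_gradient (Wof Psi) (mmul F (minv U)) G ->
  derivable_pt_lim (fun s => Wt Psi (mmul (mmul (mtr F) F) (minv (Cp s)))) t
    (/ 2 * inner (mmul (mtr (mmul F (minv U))) G) (mmul (mmul U D) (mtr U))).
Proof.
  intros HU HUs HCs HUU HD HG.
  set (Fe := mmul F (minv U)).
  set (N := fun s => mmul (mmul U (minv (Cp s))) (mtr U)).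
  assert (HNs : forall s, symmetric (N s))
    by (intros s; apply symmetric_congruence, minv_symmetric, HCs).
  set (Nd := mmul (mmul U D) (mtr U)).
  assert (HN : mderiv_at N t Nd) by (apply mderiv_mmul_r, mderiv_mmul_l, HD).
  assert (HNt : mat_eq (N t) idm).
  { unfold N. unfold symmetric in HUs.
    rewrite HUs, <- HUU, minv_mmul, !mmul_assoc, minv_l, mmul_1r, minv_r by auto; reflexivity. }
  destruct (chol_curve N Nd t HNs HN HNt) as (HQQ & HQt & HQ).
  assert (HS : symmetric (mmul (mtr Fe) G)).
  { apply (gradient_right_invariant_symmetric (Wof Psi)); auto using Wof_mmul_orthogonal.
    apply Wof_proper. }
  assert (HL : mat_eq (madd (lower_half Nd) (mtr (lower_half Nd))) Nd)
    by (apply lower_half_symmetric, (mderiv_symmetric N t); auto).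
  replace (/ 2 * inner (mmul (mtr Fe) G) Nd) with (inner G (mmul Fe (lower_half Nd)))
    by (rewrite inner_mmul_r, (inner_symmetric_half _ _ HS), HL; reflexivity).
  apply derivable_pt_lim_near_ext with (fun s => Wof Psi (mmul Fe (chol (N s)))).
  - eapply near_mono; [|exact HQQ]. intros s Hs. apply Wof_factor; auto.
  - apply (gradient_chain_rule (Wof Psi) Fe); auto.
    + apply Wof_proper.
    + rewrite HQt; apply mmul_1r.
    + apply mderiv_mmul_l, HQ.
Qed.

Lemma Be_inv_conj F U D : det3 F <> 0 -> det3 U <> 0 ->
  mat_eq (mmul (mmul (mmul F D) (mtr F))
               (minv (mmul (mmul F (minv U)) (mtr (mmul F (minv U))))))
         (mmul (mmul F (minv U)) (mmul (mmul (mmul U D) (mtr U)) (minv (mmul F (minv U))))).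
Proof.
  intros HF HU.
  assert (HFe : mat_eq (minv (mmul F (minv U))) (mmul U (minv F)))
    by (rewrite minv_mmul, minv_involutive by auto; reflexivity).
  rewrite minv_mmul, minv_mtr, HFe, mtr_mmul, !mmul_assoc.
  rewrite (mmul_cancel_l _ _ _ (mtr_minv_l F HF)), (mmul_cancel_l _ _ _ (minv_l U HU)).
  reflexivity.
Qed.

Lemma flow_rule_dissipation F Be tau D lambda : det3 F <> 0 -> det3 Be <> 0 ->
  ~ mat_eq (dev3 tau) mzero ->
  mat_eq D (mscal (-2 * lambda) (mmul (mmul (minv F)
              (mmul (mscal (/ fnorm (dev3 tau)) (dev3 tau)) Be)) (mtr (minv F)))) ->
  / 2 * inner tau (mmul (mmul (mmul F D) (mtr F)) (minv Be)) = - lambda * fnorm (dev3 tau).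
Proof.
  intros HF HB Hdev HD.
  assert (Hpos : 0 < fnorm (dev3 tau)) by (apply sqrt_lt_R0, inner_self_pos; auto).
  assert (Hsq : fnorm (dev3 tau) * fnorm (dev3 tau) = inner (dev3 tau) (dev3 tau))
    by (apply sqrt_sqrt, Rlt_le, inner_self_pos; auto).
  rewrite HD. repeat rewrite ?mmul_scal_l, ?mmul_scal_r.
  rewrite !mscal_mscal, inner_mscal_r, !mmul_assoc.
  rewrite (mmul_cancel_l _ _ _ (minv_r F HF)), (mmul_cancel_l _ _ _ (mtr_minv_r F HF)),
    minv_r, mmul_1r, inner_dev3, <- Hsq by auto.
  field; lra.
Qed.

Theorem mainTheorem12
  (Psi : R -> R -> R -> R) (HPsi : C1_pos Psi)
  (F : Mat3) (HF : 0 < det3 F)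
  (Cp : R -> Mat3) (HCp : forall t, psym (Cp t)) (HCpd : mdifferentiable Cp)
  (Fp : R -> Mat3) (HFp : forall t, psym (Fp t) /\ mat_eq (mmul (Fp t) (Fp t)) (Cp t))
  (dCpinv : R -> Mat3) (HdCpinv : forall t, mderiv_at (fun s => minv (Cp s)) t (dCpinv t))
  (DWe : R -> Mat3)
  (HDWe : forall t, is_gradient (Wof Psi) (mmul F (minv (Fp t))) (DWe t)) :
  let Fe := fun t => mmul F (minv (Fp t)) in
  let Be := fun t => mmul (Fe t) (mtr (Fe t)) in
  let taue := fun t => mmul (DWe t) (mtr (Fe t)) in
  let C := mmul (mtr F) F in
  (forall t,
     derivable_pt_lim (fun s => Wt Psi (mmul C (minv (Cp s)))) t
       (/ 2 * inner (taue t) (mmul (mmul (mmul F (dCpinv t)) (mtr F)) (minv (Be t))))) /\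
  (forall t lambda,
     ~ mat_eq (dev3 (taue t)) (fun _ _ => 0) ->
     0 <= lambda ->
     mat_eq (dCpinv t)
       (mscal (-2 * lambda)
          (mmul (mmul (minv F)
                      (mmul (mscal (/ fnorm (dev3 (taue t))) (dev3 (taue t))) (Be t)))
                (mtr (minv F)))) ->
     derivable_pt_lim (fun s => Wt Psi (mmul C (minv (Cp s)))) t
       (- lambda * fnorm (dev3 (taue t))) /\
     - lambda * fnorm (dev3 (taue t)) <= 0).
Proof.
  intros Fe Be taue C.
  assert (HdF : det3 F <> 0) by lra.
  assert (HdFe : forall t, det3 (Fe t) <> 0).
  { intros t. assert (HU := psym_det_pos _ (proj1 (HFp t))). unfold Fe.
    rewrite det3_mmul, det3_minv by lra.
    apply Rmult_integral_contrapositive; split; [lra | apply Rinv_neq_0_compat; lra]. }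
  assert (Hrate : forall t, derivable_pt_lim (fun s => Wt Psi (mmul C (minv (Cp s)))) t
       (/ 2 * inner (taue t) (mmul (mmul (mmul F (dCpinv t)) (mtr F)) (minv (Be t))))).
  { intros t. destruct (HFp t) as [HU HUU].
    assert (HdU : det3 (Fp t) <> 0) by apply Rgt_not_eq, psym_det_pos, HU.
    unfold taue, Be, Fe; cbv beta.
    rewrite Be_inv_conj, inner_conj by (auto; apply (HdFe t)).
    apply Wt_Cpinv_deriv; auto; [apply HU | intros s; apply HCp]. }
  split; [exact Hrate|].
  intros t lambda Hdev Hl Hflow.
  assert (HdBe : det3 (Be t) <> 0).
  { unfold Be; rewrite det3_mmul, det3_mtr; apply Rmult_integral_contrapositive; auto. }
  assert (Hdiss := flow_rule_dissipation F (Be t) (taue t) (dCpinv t) lambda HdF HdBe Hdev Hflow).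
  rewrite <- Hdiss. split; [apply Hrate|].
  rewrite Hdiss. pose proof (fnorm_nonneg (dev3 (taue t))); nra.
Qed.
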